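(* Let $\tau=\frac{1+\sqrt5}{2}$, $\tau'=\frac{1-\sqrt5}{2}$, $\mathbb{Z}[\tau]=\{a+b\tau: a,b\in\mathbb{Z}\}$ and $\mathbb{Z}[\tau]^-=\{x\in\mathbb{Z}[\tau]: x\le 0\}$ (as a real number). For $k\in\{2,3,4\}$ let $A_k$ be the $k\times k$ matrix $$A_2=\begin{pmatrix}2&-\tau\\-\tau&2\end{pmatrix},\quad A_3=\begin{pmatrix}2&-1&0\\-1&2&-\tau\\0&-\tau&2\end{pmatrix},\quad A_4=\begin{pmatrix}2&-1&0&0\\-1&2&-1&0\\0&-1&2&-\tau\\0&0&-\tau&2\end{pmatrix}.$$ Consider $(k+1)\times(k+1)$ matrices of the form $\begin{pmatrix}2&a^T\\ a&A_k\end{pmatrix}$ with $a\in(\mathbb{Z}[\tau]^-)^k$ (a column vector). Then, for each $k\in\{2,3,4\}$, there is exactly one such matrix with determinant $0$, namely the one with $a=(\tau',\tau')^T$ for $k=2$, $a=(0,\tau',0)^T$ for $k=3$, and $a=(\tau',0,0,0)^T$ for $k=4$.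
   Context: $A_2,A_3,A_4$ are the Cartan matrices of the noncrystallographic Coxeter groups $H_2,H_3,H_4$ (with a fixed ordering of simple roots); the matrices in the conclusion are the extended Cartan matrices of their affine extensions. A generalized (extended) Cartan matrix $(a_{ij})$ here is required to satisfy $a_{ii}=2$, $a_{ij}=a_{ji}$, $a_{ij}\in\mathbb{Z}[\tau]^-$ for $i\ne j$, and $\det(a_{ij})=0$. *)

From HB Require Import structures.
From mathcomp Require Import all_boot all_order all_algebra.
From mathcomp Require Import reals.
Set Implicit Arguments. Unset Strict Implicit. Unset Printing Implicit Defensive.
Import Order.TTheory GRing.Theory Num.Theory.
Local Open Scope ring_scope.

Section Defs.
Variable R : realType.

Definition tau : R := (1 + Num.sqrt 5) / 2.
Definition tau' : R := (1 - Num.sqrt 5) / 2.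

Definition in_Ztau (x : R) : Prop := exists a b : int, x = a%:~R + b%:~R * tau.

Definition in_Ztau_neg (x : R) : Prop := in_Ztau x /\ x <= 0.

Definition mx_of_rows (n : nat) (s : seq (seq R)) : 'M[R]_n :=
  \matrix_(i < n, j < n) nth 0 (nth [::] s i) j.

Definition cv_of_seq (n : nat) (s : seq R) : 'cV[R]_n :=
  \col_(i < n) nth 0 s i.

Definition A2 : 'M[R]_2 := mx_of_rows 2
  [:: [:: 2; - tau];
      [:: - tau; 2]].
Definition A3 : 'M[R]_3 := mx_of_rows 3
  [:: [:: 2; -1; 0];
      [:: -1; 2; - tau];
      [:: 0; - tau; 2]].
Definition A4 : 'M[R]_4 := mx_of_rows 4
  [:: [:: 2; -1; 0; 0];
      [:: -1; 2; -1; 0];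
      [:: 0; -1; 2; - tau];
      [:: 0; 0; - tau; 2]].

Definition ext_mx (k : nat) (A : 'M[R]_k) (a : 'cV[R]_k) : 'M[R]_(1 + k) :=
  block_mx (2%:M : 'M[R]_1) a^T a A.

Definition unique_extension (k : nat) (A : 'M[R]_k) (a0 : 'cV[R]_k) : Prop :=
  [/\ (forall i, in_Ztau_neg (a0 i 0)),
      \det (ext_mx A a0) = 0 &
      forall a : 'cV[R]_k, (forall i, in_Ztau_neg (a i 0)) ->
        \det (ext_mx A a) = 0 -> a = a0].

End Defs.

From HB Require Import structures.
From mathcomp Require Import all_boot all_order all_algebra.
From mathcomp Require Import reals ring lra zify.
Import Order.TTheory GRing.Theory Num.Theory.
Set Implicit Arguments. Unset Strict Implicit. Unset Printing Implicit Defensive.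
Local Open Scope ring_scope.

(* By the Schur complement, det [[2, a^T]; [a, A]] = 0 iff a^T adj(A) a = 2 det A.
   At tau the adjugate of A has nonnegative entries and a <= 0, so each term of
   this quadratic form is nonnegative, which bounds every |a_i|.  The determinant
   is an integer polynomial in tau, so it also vanishes after the Galois
   conjugation tau -> tau'; the conjugate Cartan matrix is positive semidefinite,
   and singularity of the conjugate bordered matrix gives (a_i')^2 <= 4.  An
   element of Z[tau] with both embeddings this small is 0, -1 or tau', and the
   remaining finitely many vectors are checked directly. *)

Lemma sq_eq_5sq_eq0 (a b : nat) : (a * a = 5 * (b * b))%N -> b = 0%N.
Proof.
move=> e; apply/eqP; apply: contraT; rewrite -lt0n => b_gt0.
have a_gt0 : (0 < a)%N by move: e; nia.
have := congr1 (odd \o logn 5) e.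
by rewrite /= !lognM ?muln_gt0 ?a_gt0 ?b_gt0 // (_ : logn 5 5 = 1%N) // !oddD !addbb.
Qed.

Section GoldenRatio.
Variable R : realType.
Local Notation tau := (tau R).
Local Notation tau' := (tau' R).

Lemma sqrt5_sq : Num.sqrt 5 ^+ 2 = 5 :> R.
Proof. by rewrite sqr_sqrtr. Qed.

Lemma tau_sq : tau ^+ 2 = tau + 1.
Proof. by have := sqrt5_sq; rewrite /tau; lra. Qed.

Lemma tau'_sq : tau' ^+ 2 = tau' + 1.
Proof. by have := sqrt5_sq; rewrite /tau'; lra. Qed.

Lemma tau'E : tau' = 1 - tau.
Proof. by rewrite /tau' /tau; lra. Qed.

Lemma tau_cube : tau ^+ 3 = 2 * tau + 1.
Proof. by rewrite exprS tau_sq mulrDr mulr1 -expr2 tau_sq; ring. Qed.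

Lemma tau_bounds : 8 / 5 < tau < 13 / 8.
Proof.
have := sqrt5_sq; have := sqrtr_ge0 (5 : R).
by rewrite /tau => ? ?; apply/andP; split; nra.
Qed.

Lemma golden_int_eq0 (m n : int) : m%:~R + n%:~R * tau = 0 -> m = 0 /\ n = 0.
Proof.
move=> h.
have hs : (2 * m + n)%:~R = - (n%:~R * Num.sqrt 5) :> R.
  by move: h; rewrite intrD intrM /tau; lra.
have e : (2 * m + n) * (2 * m + n) = 5 * (n * n).
  apply: (@intr_inj R); rewrite !intrM hs mulrNN.
  have -> : 5%:~R = Num.sqrt 5 ^+ 2 :> R by rewrite sqrt5_sq.
  ring.
have n0 : n = 0.
  by have := congr1 absz e; rewrite !abszM => /sq_eq_5sq_eq0 /eqP; rewrite absz_eq0 => /eqP.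
by move: h; rewrite n0 mul0r addr0 => /eqP; rewrite intr_eq0 => /eqP.
Qed.

Lemma golden_int_cases (m n : int) (x := m%:~R + n%:~R * tau : R) :
  x <= 0 -> x ^+ 2 < 2 -> (m%:~R + n%:~R * tau') ^+ 2 <= 4 -> x \in [:: 0; -1; tau'].
Proof.
rewrite /x tau'E => x_le0 x_lt x'_le; have /andP[lo hi] := tau_bounds.
set M : R := m%:~R; set N : R := n%:~R.
have x_gt : -3/2 < M + N * tau by nra.
have x'_bounds : -2 <= M + N * (1 - tau) <= 2 by apply/andP; split; nra.
have N_lt1 : N < 1.
  rewrite ltNge; apply/negP => N_ge1.
  have : 0 <= (N - 1) * (2 * tau - 1) by apply: mulr_ge0; lra.
  lra.
have N_gtm2 : -2 < N.
  rewrite ltNge; apply/negP => N_lem2.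
  have : 0 <= (-2 - N) * (2 * tau - 1) by apply: mulr_ge0; lra.
  lra.
have : n = 0 \/ n = -1.
  move: N_lt1 N_gtm2; rewrite /N -[1 : R]/(1%:~R) -[-2 : R]/((-2)%:~R) !ltr_int; lia.
rewrite !inE; case=> n_val; rewrite /N n_val in x_gt x_le0 *.
- have : m = 0 \/ m = -1.
    have : -2 < M < 1 by apply/andP; split; lra.
    rewrite /M -[1 : R]/(1%:~R) -[-2 : R]/((-2)%:~R) !ltr_int; lia.
  by case=> m_val; rewrite /M m_val; apply/or3P; [constructor 1 | constructor 2]; apply/eqP; lra.
- have m_val : m = 1.
    have : 0 < M < 2 by apply/andP; split; lra.
    rewrite /M -[0 : R]/(0%:~R) -[2 : R]/(2%:~R) !ltr_int; lia.
  by rewrite /M m_val; apply/or3P; constructor 3; apply/eqP; lra.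
Qed.

Lemma in_Ztau_neg0 : in_Ztau_neg (0 : R).
Proof. by split=> //; exists 0, 0; rewrite mul0r addr0. Qed.

Lemma in_Ztau_neg_tau' : in_Ztau_neg tau'.
Proof.
have /andP[lo _] := tau_bounds.
by split; [exists 1, (-1); rewrite tau'E mulN1r | rewrite tau'E; lra].
Qed.

End GoldenRatio.

Lemma unitmx_of_mul_scalar (F : fieldType) k (A B : 'M[F]_k) (d : F) :
  A *m B = d%:M -> d != 0 -> A \in unitmx.
Proof.
move=> AB d_neq0; have [] // := @mulmx1_unit _ _ A (d^-1 *: B).
by rewrite -scalemxAr AB scale_scalar_mx mulVf.
Qed.

Lemma bordered_det_eq0E (F : fieldType) k (A B : 'M[F]_k) (d c : F) (b : 'cV[F]_k) :
  A *m B = d%:M -> d != 0 ->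
  (\det (block_mx c%:M b^T b A) == 0) = ((b^T *m B *m b) 0 0 == c * d).
Proof.
move=> AB d_neq0.
pose N := block_mx (d%:M : 'M_1) 0 (- (B *m b)) 1%:M.
have MN : block_mx c%:M b^T b A *m N =
    block_mx ((c * d - (b^T *m B *m b) 0 0)%:M : 'M_1) b^T 0 A.
  rewrite mulmx_block !mulmx0 !mulmx1 !add0r !mulmxN !mulmxA AB mul_scalar_mx.
  rewrite mul_mx_scalar mul_scalar_mx subrr; congr block_mx.
  by apply/matrixP => i j; rewrite !ord1 !mxE /= !mulr1n.
have := congr1 determinant MN.
rewrite det_mulmx det_lblock det1 mulr1 det_ublock !det_scalar1 => detE.
have detA_neq0 : \det A != 0 by rewrite -unitfE -unitmxE (unitmx_of_mul_scalar AB).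
apply/eqP/eqP => [det0 | formE].
  move: detE; rewrite det0 mul0r => /esym/eqP.
  by rewrite mulf_eq0 (negbTE detA_neq0) orbF subr_eq0 mulrC => /eqP.
by move: detE; rewrite formE mulrC subrr mul0r => /eqP; rewrite mulf_eq0 (negbTE d_neq0) => /eqP.
Qed.

Lemma quad_form_entry_le (R : numDomainType) k (B : 'M[R]_k) (a : 'cV[R]_k) :
  (forall i j, 0 <= B i j) -> (forall i, a i 0 <= 0) ->
  forall i, B i i * a i 0 ^+ 2 <= (a^T *m B *m a) 0 0.
Proof.
move=> B_ge0 a_le0 i.
have col_le0 j : (a^T *m B) 0 j <= 0.
  by rewrite mxE sumr_le0 // => l _; rewrite mxE mulr_le0_ge0.
rewrite mxE (bigD1 i) //= ler_wpDr //; first by apply: sumr_ge0 => j _; exact: mulr_le0.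
rewrite mxE (bigD1 i) //= mulrDl ler_wpDr //.
  by rewrite mulr_le0 // sumr_le0 // => l _; rewrite mxE mulr_le0_ge0.
by rewrite mxE [a i 0 * _]mulrC -mulrA -expr2.
Qed.

Lemma entry11_trmx (T : Type) (M : 'M[T]_1) : M 0 0 = M^T 0 0.
Proof. by rewrite mxE. Qed.

Lemma entryB (V : zmodType) m n (M N : 'M[V]_(m, n)) i j : (M - N) i j = M i j - N i j.
Proof. by rewrite !mxE. Qed.

Lemma entryZ (R : pzRingType) m n a (M : 'M[R]_(m, n)) i j : (a *: M) i j = a * M i j.
Proof. by rewrite mxE. Qed.

Section BorderedMatrix.
Variables (R : realFieldType) (k : nat) (c : R) (A : 'M[R]_k) (b : 'cV[R]_k).
Hypotheses (c_gt0 : 0 < c) (A_sym : A^T = A) (A_unit : A \in unitmx)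
  (A_psd : forall u : 'rV_k, 0 <= (u *m A *m u^T) 0 0).

Lemma bordered_det0_covector :
  \det (block_mx c%:M b^T b A) = 0 -> exists2 y : 'rV_k, y *m A = b^T & (y *m b) 0 0 = c.
Proof.
move/eqP/det0P => [v v_neq0].
rewrite -[v]hsubmxK mul_row_block -row_mx0 => /eq_row_mx[E1 E2].
set s := lsubmx v 0 0; set w := rsubmx v.
have sE : lsubmx v = s%:M by exact: mx11_scalar.
rewrite sE mul_scalar_mx in E1; rewrite sE mul_scalar_mx in E2.
have s_neq0 : s != 0.
  apply: contra v_neq0 => /eqP s0.
  move: E2; rewrite s0 scale0r add0r => /(congr1 (mulmx^~ (invmx A))).
  rewrite mulmxK // mul0mx => w0.
  have v0 : lsubmx v = 0 by apply/matrixP => i j; rewrite !ord1 -/s s0 mxE.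
  by rewrite -[v]hsubmxK v0 w0 row_mx0.
exists (- s^-1 *: w).
  rewrite -scalemxAl; move/eqP: E2; rewrite addrC addr_eq0 => /eqP ->.
  by rewrite scalerN scaleNr opprK scalerA mulVf // scale1r.
rewrite -scalemxAl; move/eqP: E1; rewrite addrC addr_eq0 => /eqP ->.
by rewrite scalerN scaleNr opprK scalerA mulVf // scale1r mxE mulr1n.
Qed.

Lemma covector_bound (y : 'rV_k) : y *m A = b^T -> (y *m b) 0 0 = c ->
  forall u : 'rV_k, ((u *m b) 0 0) ^+ 2 <= c * (u *m A *m u^T) 0 0.
Proof.
move=> yA yb u; set t := (u *m b) 0 0.
have Qyu : (y *m A *m u^T) 0 0 = t by rewrite yA -trmx_mul mxE.
have Quy : (u *m A *m y^T) 0 0 = t.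
  by rewrite -Qyu [LHS]entry11_trmx !trmx_mul trmxK A_sym mulmxA.
have Qyy : (y *m A *m y^T) 0 0 = c by rewrite yA -trmx_mul mxE.
(* The form at c u - t y equals c (c uAu^T - t^2). *)
have := A_psd (c *: u - t *: y).
rewrite linearB !linearZ /= !scalerN !(mulmxBl, mulmxBr) -!(scalemxAl, scalemxAr).
rewrite !(entryB, entryZ) Qyu Quy Qyy => h.
have : 0 <= c * (c * (u *m A *m u^T) 0 0 - t ^+ 2) by lra.
by rewrite pmulr_rge0 // subr_ge0.
Qed.

Lemma bordered_det0_entry_bound :
  \det (block_mx c%:M b^T b A) = 0 -> forall i, b i 0 ^+ 2 <= c * A i i.
Proof.
move=> /bordered_det0_covector[y yA yb] i.
have := covector_bound yA yb (delta_mx 0 i).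
by rewrite -!rowE trmx_delta -colE !mxE.
Qed.

End BorderedMatrix.

(* For x = tau = 2 cos (pi / 5) and n <= 4 this is the Cartan matrix of H_n: its Coxeter
   graph is a path whose last edge carries the label 5. *)
Definition cartanH (T : pzRingType) (n : nat) (x : T) : 'M[T]_n :=
  \matrix_(i, j) if i == j then 2
                 else if (i.+1 == j) || (j.+1 == i) then
                   (if maxn i j == n.-1 then - x else -1)
                 else 0.

Lemma map_cartanH (T S : pzRingType) (f : {rmorphism T -> S}) n (x : T) :
  map_mx f (cartanH n x) = cartanH n (f x).
Proof.
apply/matrixP => i j; rewrite !mxE.
by do !case: ifP => _; rewrite ?rmorphN ?rmorph1 ?rmorph0 ?rmorph_nat.
Qed.

Lemma cartanH_sym (T : pzRingType) n (x : T) : (cartanH n x)^T = cartanH n x.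
Proof. by apply/matrixP => i j; rewrite !mxE eq_sym orbC maxnC. Qed.

Lemma cartanH_psd (T : realFieldType) n (x : T) : (n <= 4)%N -> x ^+ 2 <= 8 / 3 ->
  forall u : 'rV_n, 0 <= (u *m cartanH n x *m u^T) 0 0.
Proof.
move=> n_le4 x2 u; rewrite !mxE.
case: n n_le4 u => [|[|[|[|[|//]]]]] _ u.
all: rewrite ?big_ord0 ?big_ord_recr /= ?big_ord0 ?mxE ?big_ord_recr /= ?big_ord0 ?mxE /=.
- by [].
- have := sqr_ge0 (u 0 ord_max); nra.
- set a := u 0 (widen_ord _ _); set b := u 0 ord_max.
  have := sqr_ge0 (a - x * b / 2).
  have : 0 <= (2 - x ^+ 2 / 2) * b ^+ 2 by rewrite mulr_ge0 ?sqr_ge0 //; lra.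
  nra.
- set a := u 0 (widen_ord _ (widen_ord _ _)); set b := u 0 (widen_ord _ _); set c := u 0 ord_max.
  have := sqr_ge0 (a - b / 2); have := sqr_ge0 (b - 2 * x * c / 3).
  have : 0 <= (2 - 2 * x ^+ 2 / 3) * c ^+ 2 by rewrite mulr_ge0 ?sqr_ge0 //; lra.
  nra.
- set a := u 0 (widen_ord _ (widen_ord _ (widen_ord _ _))).
  set b := u 0 (widen_ord _ (widen_ord _ _)); set c := u 0 (widen_ord _ _); set d := u 0 ord_max.
  have := sqr_ge0 (a - b / 2); have := sqr_ge0 (b - 2 * c / 3).
  have := sqr_ge0 (c - 3 * x * d / 4).
  have : 0 <= (2 - 3 * x ^+ 2 / 4) * d ^+ 2 by rewrite mulr_ge0 ?sqr_ge0 //; lra.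
  nra.
Qed.

Section CartanMatrices.
Variable R : realType.

Lemma A2E : A2 R = cartanH 2 (tau R).
Proof. by apply/matrixP => [][[|[|?]] ?] [[|[|?]] ?]; rewrite !mxE. Qed.

Lemma A3E : A3 R = cartanH 3 (tau R).
Proof. by apply/matrixP => [][[|[|[|?]]] ?] [[|[|[|?]]] ?]; rewrite !mxE. Qed.

Lemma A4E : A4 R = cartanH 4 (tau R).
Proof. by apply/matrixP => [][[|[|[|[|?]]]] ?] [[|[|[|[|?]]]] ?]; rewrite !mxE. Qed.

(* Adjugates of the Cartan matrices, reduced modulo x^2 = x + 1. *)
Definition adjH2 (x : R) : 'M[R]_2 := mx_of_rows 2 [:: [:: 2; x]; [:: x; 2]].
Definition adjH3 (x : R) : 'M[R]_3 := mx_of_rows 3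
  [:: [:: 3 - x; 2; x]; [:: 2; 4; 2 * x]; [:: x; 2 * x; 3]].
Definition adjH4 (x : R) : 'M[R]_4 := mx_of_rows 4
  [:: [:: 4 - 2 * x; 3 - x; 2; x]; [:: 3 - x; 6 - 2 * x; 4; 2 * x];
      [:: 2; 4; 6; 3 * x]; [:: x; 2 * x; 3 * x; 4]].

Lemma cartanH_adj2 (x : R) : x ^+ 2 = x + 1 -> cartanH 2 x *m adjH2 x = (3 - x)%:M.
Proof.
move=> x2; apply/matrixP => i j; rewrite !mxE !big_ord_recr big_ord0 /= !mxE.
by case: i j => [[|[|?]] ?] [[|[|?]] ?] //=; rewrite ?mulr1n ?mulr0n; lra.
Qed.

Lemma cartanH_adj3 (x : R) : x ^+ 2 = x + 1 -> cartanH 3 x *m adjH3 x = (4 - 2 * x)%:M.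
Proof.
move=> x2; apply/matrixP => i j; rewrite !mxE !big_ord_recr big_ord0 /= !mxE.
by case: i j => [[|[|[|?]]] ?] [[|[|[|?]]] ?] //=; rewrite ?mulr1n ?mulr0n; lra.
Qed.

Lemma cartanH_adj4 (x : R) : x ^+ 2 = x + 1 -> cartanH 4 x *m adjH4 x = (5 - 3 * x)%:M.
Proof.
move=> x2; apply/matrixP => i j; rewrite !mxE !big_ord_recr big_ord0 /= !mxE.
by case: i j => [[|[|[|[|?]]]] ?] [[|[|[|[|?]]]] ?] //=; rewrite ?mulr1n ?mulr0n; lra.
Qed.

End CartanMatrices.

Section GoldenExtension.
Variable R : realType.
Local Notation tau := (tau R).
Local Notation tau' := (tau' R).
Local Notation zeval x := (horner_morph (fun z : int => mulrC x z%:~R)).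

Lemma zevalX (x : R) : zeval x 'X = x.
Proof. exact: horner_morphX. Qed.

Lemma zevalC (x : R) c : zeval x c%:P = c%:~R.
Proof. exact: horner_morphC. Qed.

Definition golden_poly : {poly int} := 'X^2 - 'X - 1.

Lemma size_golden_poly : size golden_poly = 3.
Proof.
by rewrite /golden_poly -addrA size_polyDl ?size_polyXn // -opprD size_polyN -polyC1 size_XaddC.
Qed.

Lemma golden_poly_monic : golden_poly \is monic.
Proof.
rewrite monicE /golden_poly -addrA lead_coefDl ?lead_coefXn //.
by rewrite -opprD size_polyN -polyC1 size_XaddC size_polyXn.
Qed.

Lemma zeval_golden_poly (x : R) : x ^+ 2 = x + 1 -> zeval x golden_poly = 0.
Proof.
by move=> x2; rewrite /golden_poly !rmorphB rmorphXn rmorph1 /= zevalX x2 addrAC addrK subrr.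
Qed.

(* Galois conjugation: reduce modulo the minimal polynomial of tau, whose other root is tau'. *)
Lemma zeval_golden_conj p : zeval tau p = 0 -> zeval tau' p = 0.
Proof.
pose r := p %% golden_poly.
have r_size : (size r <= 2)%N.
  by have := ltn_modpN0 p (monic_neq0 golden_poly_monic); rewrite size_golden_poly.
have zevalE (x : R) : x ^+ 2 = x + 1 -> zeval x p = (r`_0)%:~R + (r`_1)%:~R * x.
  move=> x2; rewrite {1}(Pdiv.IdomainMonic.divp_eq golden_poly_monic p).
  rewrite rmorphD rmorphM /= zeval_golden_poly // mulr0 add0r.
  rewrite /horner_morph -/r (horner_coef_wide _ (n := 2)) ?size_map_inj_poly //;
    last exact: intr_inj.
  by rewrite !big_ord_recr big_ord0 /= !coef_map add0r expr0 mulr1 expr1.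
rewrite zevalE ?tau_sq // => /golden_int_eq0[r0 r1].
by rewrite zevalE ?tau'_sq // r0 r1 mul0r addr0.
Qed.

Definition golden_col k (x : R) (m n : 'I_k -> int) : 'cV[R]_k :=
  \col_i ((m i)%:~R + (n i)%:~R * x).

Lemma det_ext_golden_conj k (m n : 'I_k -> int) :
  \det (ext_mx (cartanH k tau) (golden_col tau m n)) = 0 ->
  \det (ext_mx (cartanH k tau') (golden_col tau' m n)) = 0.
Proof.
pose v : 'cV[{poly int}]_k := \col_i ((m i)%:P + (n i)%:P * 'X).
pose M := block_mx (2%:M : 'M_1) v^T v (cartanH k 'X).
have ME (x : R) : ext_mx (cartanH k x) (golden_col x m n) = map_mx (zeval x) M.
  have vE : map_mx (zeval x) v = golden_col x m n.
    by apply/matrixP => i j; rewrite !mxE rmorphD rmorphM /= !zevalC zevalX.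
  rewrite /ext_mx map_block_mx map_scalar_mx -map_trmx map_cartanH vE /=.
  by rewrite zevalX [in RHS]rmorph_nat.
by rewrite !ME !det_map_mx; exact: zeval_golden_conj.
Qed.

Lemma ext_root_conj_bound k (a : 'cV[R]_k) :
  (forall u : 'rV_k, 0 <= (u *m cartanH k tau' *m u^T) 0 0) -> cartanH k tau' \in unitmx ->
  (forall i, in_Ztau (a i 0)) -> \det (ext_mx (cartanH k tau) a) = 0 ->
  forall i, exists m n : int,
    a i 0 = m%:~R + n%:~R * tau /\ (m%:~R + n%:~R * tau') ^+ 2 <= 4.
Proof.
move=> psd' unit' aZ.
have /fin_all_exists[mn mnE] :
    forall i, exists mn : int * int, a i 0 = mn.1%:~R + mn.2%:~R * tau.
  by move=> i; have [m [n ->]] := aZ i; exists (m, n).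
have -> : a = golden_col tau (fst \o mn) (snd \o mn).
  by apply/matrixP => i j; rewrite ord1 mxE mnE.
move=> /det_ext_golden_conj.
move=> /(bordered_det0_entry_bound (@ltr0Sn R 1) (cartanH_sym _ _) unit' psd') bound i.
exists (mn i).1, (mn i).2; split; first by rewrite mxE.
by have := bound i; rewrite !mxE eqxx -natrM.
Qed.

Section Uniqueness.
Variables (k : nat) (B : 'M[R]_k) (d : R).
Hypotheses (AB : cartanH k tau *m B = d%:M) (B_ge0 : forall i j, 0 <= B i j).
Hypotheses (d_gt0 : 0 < d) (d_lt_diag : forall i, d < B i i).
Hypotheses (psd' : forall u : 'rV_k, 0 <= (u *m cartanH k tau' *m u^T) 0 0).
Hypothesis unit' : cartanH k tau' \in unitmx.

Lemma ext_det_eq0E (a : 'cV[R]_k) :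
  \det (ext_mx (cartanH k tau) a) = 0 <-> (a^T *m B *m a) 0 0 = 2 * d.
Proof.
have formP := bordered_det_eq0E 2 a AB (lt0r_neq0 d_gt0).
rewrite /ext_mx; split=> [/eqP | formE]; first by rewrite formP => /eqP.
by apply/eqP; rewrite formP formE.
Qed.

Lemma ext_root_entries (a : 'cV[R]_k) : (forall i, in_Ztau_neg (a i 0)) ->
  \det (ext_mx (cartanH k tau) a) = 0 ->
  forall i, a i 0 \in [:: 0; -1; tau'] /\ B i i * a i 0 ^+ 2 <= 2 * d.
Proof.
move=> aZ det0 i.
have bound : B i i * a i 0 ^+ 2 <= 2 * d.
  by rewrite -(proj1 (ext_det_eq0E a) det0); apply: quad_form_entry_le => // j; case: (aZ j).
split=> //.
have [m [n [aE conj]]] := ext_root_conj_bound psd' unit' (fun j => (aZ j).1) det0 i.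
have a_sq_lt2 : a i 0 ^+ 2 < 2.
  rewrite ltNge; apply/negP => a_sq_ge2; have := d_lt_diag i.
  have : 0 <= (a i 0 ^+ 2 - 2) * B i i by apply: mulr_ge0; [lra | exact: B_ge0].
  lra.
by rewrite aE; apply: golden_int_cases; rewrite -?aE //; case: (aZ i).
Qed.

Lemma golden_unique_extension (a0 : 'cV[R]_k) :
  (forall i, in_Ztau_neg (a0 i 0)) -> (a0^T *m B *m a0) 0 0 = 2 * d ->
  (forall a : 'cV_k, (forall i, a i 0 \in [:: 0; -1; tau'] /\ B i i * a i 0 ^+ 2 <= 2 * d) ->
     (a^T *m B *m a) 0 0 = 2 * d -> a = a0) ->
  unique_extension (cartanH k tau) a0.
Proof.
move=> a0Z a0_root finite; split=> //; first exact/ext_det_eq0E.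
by move=> a aZ det0; apply: finite; [exact: ext_root_entries | exact/ext_det_eq0E].
Qed.

End Uniqueness.
End GoldenExtension.

Section Cases.
Variable R : realType.
Local Notation tau := (tau R).
Local Notation tau' := (tau' R).

Lemma cv_of_seq_entries k (a : 'cV[R]_k.+1) :
  a = cv_of_seq k.+1 [seq a (inord i) 0 | i <- iota 0 k.+1].
Proof.
by apply/matrixP => i j; rewrite ord1 mxE (nth_map 0%N) ?size_iota // nth_iota // add0n inord_val.
Qed.

Lemma H2_unique_extension : unique_extension (A2 R) (cv_of_seq 2 [:: tau'; tau']).
Proof.
have /andP[lo hi] := tau_bounds R; have t2 := tau_sq R.
have t3 := tau_cube R.
rewrite A2E; apply: (golden_unique_extension (B := adjH2 tau) (d := 3 - tau)).
- exact/cartanH_adj2/tau_sq.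
- by move=> [[|[|?]] ?] [[|[|?]] ?]; rewrite !mxE //=; lra.
- lra.
- by move=> [[|[|?]] ?]; rewrite !mxE //=; lra.
- by apply: cartanH_psd => //; rewrite tau'_sq tau'E; lra.
- apply: unitmx_of_mul_scalar (cartanH_adj2 (tau'_sq R)) _.
  by apply: lt0r_neq0; rewrite tau'E; lra.
- by move=> [[|[|?]] ?]; rewrite !mxE //=; exact: in_Ztau_neg_tau'.
- rewrite !mxE !big_ord_recr !big_ord0 /= !mxE !big_ord_recr !big_ord0 /= !mxE /= tau'E.
  lra.
move=> a entries; rewrite [a]cv_of_seq_entries /= in entries *.
move: (entries (inord 0)) (entries (inord 1)); rewrite !mxE !inordK //=.
rewrite !big_ord_recr !big_ord0 /= !mxE !big_ord_recr !big_ord0 /= !mxE /=.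
move: (a (inord 0) 0) (a (inord 1) 0) => x0 x1; rewrite !inE tau'E.
case=> /or3P[]/eqP-> b0; try (exfalso; lra);
case=> /or3P[]/eqP-> b1; try (exfalso; lra);
move=> form; first [by [] | exfalso; lra].
Qed.

Lemma H3_unique_extension : unique_extension (A3 R) (cv_of_seq 3 [:: 0; tau'; 0]).
Proof.
have /andP[lo hi] := tau_bounds R; have t2 := tau_sq R.
have t3 := tau_cube R.
rewrite A3E; apply: (golden_unique_extension (B := adjH3 tau) (d := 4 - 2 * tau)).
- exact/cartanH_adj3/tau_sq.
- by move=> [[|[|[|?]]] ?] [[|[|[|?]]] ?]; rewrite !mxE //=; lra.
- lra.
- by move=> [[|[|[|?]]] ?]; rewrite !mxE //=; lra.
- by apply: cartanH_psd => //; rewrite tau'_sq tau'E; lra.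
- apply: unitmx_of_mul_scalar (cartanH_adj3 (tau'_sq R)) _.
  by apply: lt0r_neq0; rewrite tau'E; lra.
- by move=> [[|[|[|?]]] ?]; rewrite !mxE //=;
    [exact: in_Ztau_neg0 | exact: in_Ztau_neg_tau' | exact: in_Ztau_neg0].
- rewrite !mxE !big_ord_recr !big_ord0 /= !mxE !big_ord_recr !big_ord0 /= !mxE /= tau'E.
  lra.
move=> a entries; rewrite [a]cv_of_seq_entries /= in entries *.
move: (entries (inord 0)) (entries (inord 1)) (entries (inord 2)); rewrite !mxE !inordK //=.
rewrite !big_ord_recr !big_ord0 /= !mxE !big_ord_recr !big_ord0 /= !mxE /=.
move: (a (inord 0) 0) (a (inord 1) 0) (a (inord 2) 0) => x0 x1 x2; rewrite !inE tau'E.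
case=> /or3P[]/eqP-> b0; try (exfalso; lra);
case=> /or3P[]/eqP-> b1; try (exfalso; lra);
case=> /or3P[]/eqP-> b2; try (exfalso; lra);
move=> form; first [by [] | exfalso; lra].
Qed.

Lemma H4_unique_extension : unique_extension (A4 R) (cv_of_seq 4 [:: tau'; 0; 0; 0]).
Proof.
have /andP[lo hi] := tau_bounds R; have t2 := tau_sq R.
have t3 := tau_cube R.
rewrite A4E; apply: (golden_unique_extension (B := adjH4 tau) (d := 5 - 3 * tau)).
- exact/cartanH_adj4/tau_sq.
- by move=> [[|[|[|[|?]]]] ?] [[|[|[|[|?]]]] ?]; rewrite !mxE //=; lra.
- lra.
- by move=> [[|[|[|[|?]]]] ?]; rewrite !mxE //=; lra.
- by apply: cartanH_psd => //; rewrite tau'_sq tau'E; lra.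
- apply: unitmx_of_mul_scalar (cartanH_adj4 (tau'_sq R)) _.
  by apply: lt0r_neq0; rewrite tau'E; lra.
- by move=> [[|[|[|[|?]]]] ?]; rewrite !mxE //=; [exact: in_Ztau_neg_tau' | exact: in_Ztau_neg0 ..].
- rewrite !mxE !big_ord_recr !big_ord0 /= !mxE !big_ord_recr !big_ord0 /= !mxE /= tau'E.
  lra.
move=> a entries; rewrite [a]cv_of_seq_entries /= in entries *.
move: (entries (inord 0)) (entries (inord 1)) (entries (inord 2)) (entries (inord 3)).
rewrite !mxE !inordK //=.
rewrite !big_ord_recr !big_ord0 /= !mxE !big_ord_recr !big_ord0 /= !mxE /=.
move: (a (inord 0) 0) (a (inord 1) 0) (a (inord 2) 0) (a (inord 3) 0) => x0 x1 x2 x3.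
rewrite !inE tau'E.
case=> /or3P[]/eqP-> b0; try (exfalso; lra);
case=> /or3P[]/eqP-> b1; try (exfalso; lra);
case=> /or3P[]/eqP-> b2; try (exfalso; lra);
case=> /or3P[]/eqP-> b3; try (exfalso; lra);
move=> form; first [by [] | exfalso; lra].
Qed.
End Cases.

Theorem mainTheorem1 (R : realType) :
  [/\ unique_extension (A2 R) (cv_of_seq 2 [:: tau' R; tau' R]),
      unique_extension (A3 R) (cv_of_seq 3 [:: 0; tau' R; 0]) &
      unique_extension (A4 R) (cv_of_seq 4 [:: tau' R; 0; 0; 0])].
Proof.
by split; [exact: H2_unique_extension | exact: H3_unique_extension | exact: H4_unique_extension].
Qed.
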